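(* (Energy preservation of the KZ power spectral density.) Let $\omega_0>0$, $z\ge 0$, $\epsilon>0$, and let $(S^0_k)_{k\in\mathbb{Z}}$ be a finitely supported sequence of real numbers. Define for $k\in\mathbb{Z}$ $$S^{\mathrm{KZ}}_k(z):=S^0_k+8\epsilon^2\sum_{(l,m,n)\in\mathrm{nr}_k}|H_{lmnk}(z)|^2\,T_{lmnk},$$ with $T_{lmnk}:=S^0_lS^0_mS^0_n+S^0_lS^0_mS^0_k-S^0_lS^0_nS^0_k-S^0_mS^0_nS^0_k$. Then $$\sum_{k\in\mathbb{Z}}S^{\mathrm{KZ}}_k(z)=\sum_{k\in\mathbb{Z}}S^0_k,$$ equivalently $\sum_{k}\sum_{(l,m,n)\in\mathrm{nr}_k}|H_{lmnk}(z)|^2T_{lmnk}=0$.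
   Context: $\mathrm{nr}_k:=\{(l,m,n)\in\mathbb{Z}^3:\ l+m=n+k,\ l\neq k,\ m\neq k\}$. $\Omega_{lmnk}:=\omega_0^2(l^2+m^2-n^2-k^2)$. The $H$-function is $H_{lmnk}(z):=(1-e^{j\Omega_{lmnk}z})/\Omega_{lmnk}$ if $\Omega_{lmnk}\neq0$ and $H_{lmnk}(z):=-jz$ if $\Omega_{lmnk}=0$ (here $j=\sqrt{-1}$). $T_{lmnk}$ is called the collision term. *)

From Stdlib Require Import Reals ZArith Lia Lra.
From Stdlib Require Import ClassicalEpsilon.
Open Scope R_scope.

Fixpoint box_sum_nat (f : Z -> R) (n : nat) : R :=
  match n with
  | O => f 0%Z
  | S p => box_sum_nat f p + f (Z.of_nat (S p)) + f (- Z.of_nat (S p))%Z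
  end.

Definition supported_in (f : Z -> R) (N : nat) : Prop :=
  forall k : Z, (Z.of_nat N < Z.abs k)%Z -> f k = 0.

Definition fin_supp (f : Z -> R) : Prop := exists N : nat, supported_in f N.

(* Sum over Z of a finitely supported family: sum over any box containing
   the support (chosen by Hilbert's epsilon; the value is irrelevant for
   families that are not finitely supported, which never occur here). *)
Definition Zsum (f : Z -> R) : R :=
  box_sum_nat f (epsilon (inhabits 0%nat) (supported_in f)).

Definition in_nr (k l m n : Z) : bool :=
  (Z.eqb (l + m) (n + k) && negb (Z.eqb l k) && negb (Z.eqb m k))%bool.

Definition Omega (omega0 : R) (l m n k : Z) : R :=
  omega0 ^ 2 * IZR (l ^ 2 + m ^ 2 - n ^ 2 - k ^ 2).

(* H_{lmnk}(z) as a complex number (real part, imaginary part):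
   (1 - e^{j W z}) / W  if W <> 0, and  -j z  if W = 0. *)
Definition H (omega0 : R) (l m n k : Z) (z : R) : R * R :=
  let W := Omega omega0 l m n k in
  if Req_EM_T W 0 then (0, - z)
  else ((1 - cos (W * z)) / W, - sin (W * z) / W).

Definition Cnorm2 (c : R * R) : R := fst c ^ 2 + snd c ^ 2.

Definition T (S0 : Z -> R) (l m n k : Z) : R :=
  S0 l * S0 m * S0 n + S0 l * S0 m * S0 k - S0 l * S0 n * S0 k
  - S0 m * S0 n * S0 k.

Definition SKZ (omega0 eps z : R) (S0 : Z -> R) (k : Z) : R :=
  S0 k + 8 * eps ^ 2 *
    Zsum (fun l => Zsum (fun m => Zsum (fun n =>
      if in_nr k l m n then Cnorm2 (H omega0 l m n k z) * T S0 l m n k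
      else 0))).

From Stdlib Require Import Reals ZArith Lia Lra ClassicalEpsilon FunctionalExtensionality.
Open Scope R_scope.

(* Dropping the constraint [l <> k], [m <> k] of nr_k, the summand splits as
   X(k,l,m,n) - X(m,n,k,l), where X(k,l,m,n) is |H_lmnk|^2 (S_l S_m S_n + S_l S_m S_k)
   on the resonance l + m = n + k.  This uses that |H_lmnk|^2 is invariant under
   (l,m) <-> (n,k), which only flips the sign of Omega.  Summing over all four
   indices, the two sums differ by swapping the pairs (k,l) and (m,n), so the
   collision contribution vanishes.  Finite support of S0 confines every sum to a
   finite box. *)

Notation B := box_sum_nat.

Lemma box_sum_ext (f g : Z -> R) (n : nat) :
  (forall x, f x = g x) -> B f n = B g n.
Proof. intro E. induction n; cbn [box_sum_nat]; rewrite ?IHn, ?E; reflexivity. Qed.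

Lemma box_sum_plus (f g : Z -> R) (n : nat) :
  B (fun x => f x + g x) n = B f n + B g n.
Proof. induction n; cbn [box_sum_nat]; [reflexivity | rewrite IHn; ring]. Qed.

Lemma box_sum_minus (f g : Z -> R) (n : nat) :
  B (fun x => f x - g x) n = B f n - B g n.
Proof. induction n; cbn [box_sum_nat]; [reflexivity | rewrite IHn; ring]. Qed.

Lemma box_sum_scal (c : R) (f : Z -> R) (n : nat) :
  B (fun x => c * f x) n = c * B f n.
Proof. induction n; cbn [box_sum_nat]; [reflexivity | rewrite IHn; ring]. Qed.

Lemma box_sum_eq0 (f : Z -> R) (n : nat) : (forall x, f x = 0) -> B f n = 0.
Proof. intro E. induction n; cbn [box_sum_nat]; rewrite ?IHn, ?E; ring. Qed.

Lemma box_sum_comm (F : Z -> Z -> R) (n1 n2 : nat) :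
  B (fun x => B (fun y => F x y) n2) n1 = B (fun y => B (fun x => F x y) n1) n2.
Proof.
  induction n1; cbn [box_sum_nat]; [reflexivity |].
  rewrite IHn1, <- !box_sum_plus. reflexivity.
Qed.

Lemma box_sum_swap_pairs (F : Z -> Z -> Z -> Z -> R) (n : nat) :
  B (fun a => B (fun b => B (fun c => B (fun d => F a b c d) n) n) n) n =
  B (fun c => B (fun d => B (fun a => B (fun b => F a b c d) n) n) n) n.
Proof.
  assert (move_in : forall G : Z -> Z -> Z -> R,
    B (fun b => B (fun c => B (fun d => G b c d) n) n) n =
    B (fun c => B (fun d => B (fun b => G b c d) n) n) n).
  { intro G. rewrite box_sum_comm.
    apply box_sum_ext; intro c. apply box_sum_comm. }
  rewrite (box_sum_ext _ _ n (fun a => move_in (F a))).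
  exact (move_in (fun a c d => B (fun b => F a b c d) n)).
Qed.

Lemma box_sum_supported (f : Z -> R) (N M : nat) :
  supported_in f N -> (N <= M)%nat -> B f M = B f N.
Proof.
  intros hN hle. induction hle as [| M hle IH]; [reflexivity |].
  cbn [box_sum_nat]. rewrite IH, !hN by lia. ring.
Qed.

Lemma Zsum_box (f : Z -> R) (N : nat) : supported_in f N -> Zsum f = B f N.
Proof.
  intro hN. unfold Zsum. set (E := epsilon _ _).
  assert (hE : supported_in f E) by (apply epsilon_spec; exists N; exact hN).
  rewrite <- (box_sum_supported f E (Nat.max E N)), <- (box_sum_supported f N (Nat.max E N));
    auto with arith.
Qed.

Lemma Zsum3_box (F : Z -> Z -> Z -> R) (M : nat) :
  (forall l m n, (Z.of_nat M < Z.abs l \/ Z.of_nat M < Z.abs m \/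
                  Z.of_nat M < Z.abs n)%Z -> F l m n = 0) ->
  Zsum (fun l => Zsum (fun m => Zsum (fun n => F l m n))) =
  B (fun l => B (fun m => B (fun n => F l m n) M) M) M.
Proof.
  intro hF.
  assert (inner : forall l m, Zsum (fun n => F l m n) = B (fun n => F l m n) M).
  { intros l m. apply Zsum_box. intros n Hn. apply hF. lia. }
  assert (middle : forall l, Zsum (fun m => Zsum (fun n => F l m n)) =
                             B (fun m => B (fun n => F l m n) M) M).
  { intro l. rewrite (functional_extensionality _ _ (inner l)).
    apply Zsum_box. intros m Hm. apply box_sum_eq0. intro n. apply hF. lia. }
  rewrite (functional_extensionality _ _ middle).
  apply Zsum_box. intros l Hl.
  apply box_sum_eq0; intro m; apply box_sum_eq0; intro n. apply hF. lia.
Qed.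

Lemma Omega_swap (omega0 : R) (l m n k : Z) :
  Omega omega0 n k l m = - Omega omega0 l m n k.
Proof.
  unfold Omega.
  replace (n ^ 2 + k ^ 2 - l ^ 2 - m ^ 2)%Z
    with (- (l ^ 2 + m ^ 2 - n ^ 2 - k ^ 2))%Z by ring.
  rewrite opp_IZR. ring.
Qed.

Lemma Cnorm2_H_swap (omega0 z : R) (l m n k : Z) :
  Cnorm2 (H omega0 n k l m z) = Cnorm2 (H omega0 l m n k z).
Proof.
  unfold H. rewrite Omega_swap. set (W := Omega omega0 l m n k).
  destruct (Req_EM_T (- W) 0), (Req_EM_T W 0); try reflexivity; try lra.
  replace (- W * z) with (- (W * z)) by ring.
  rewrite cos_neg, sin_neg. unfold Cnorm2; simpl. field. lra.
Qed.

(* On the resonance, an index outside the box of radius 3N forces a second one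
   outside the box of radius N, and each monomial of T misses only one index. *)
Lemma T_supported (S0 : Z -> R) (N : nat) (l m n k : Z) :
  supported_in S0 N -> (l + m = n + k)%Z ->
  (Z.of_nat (3 * N) < Z.abs l \/ Z.of_nat (3 * N) < Z.abs m \/
   Z.of_nat (3 * N) < Z.abs n \/ Z.of_nat (3 * N) < Z.abs k)%Z ->
  T S0 l m n k = 0.
Proof.
  intros hN E D. unfold T.
  destruct (Z_le_gt_dec (Z.abs l) (Z.of_nat N)); try rewrite (hN l) by lia;
  destruct (Z_le_gt_dec (Z.abs m) (Z.of_nat N)); try rewrite (hN m) by lia;
  destruct (Z_le_gt_dec (Z.abs n) (Z.of_nat N)); try rewrite (hN n) by lia;
  destruct (Z_le_gt_dec (Z.abs k) (Z.of_nat N)); try rewrite (hN k) by lia;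
  first [ring | lia].
Qed.

Definition kz_summand (omega0 z : R) (S0 : Z -> R) (k l m n : Z) : R :=
  if in_nr k l m n then Cnorm2 (H omega0 l m n k z) * T S0 l m n k else 0.

Definition resonant_term (omega0 z : R) (S0 : Z -> R) (k l m n : Z) : R :=
  if Z.eqb (l + m) (n + k)
  then Cnorm2 (H omega0 l m n k z) * (S0 l * S0 m * S0 n + S0 l * S0 m * S0 k)
  else 0.

Lemma kz_summand_supported (omega0 z : R) (S0 : Z -> R) (N : nat) (k l m n : Z) :
  supported_in S0 N ->
  (Z.of_nat (3 * N) < Z.abs l \/ Z.of_nat (3 * N) < Z.abs m \/
   Z.of_nat (3 * N) < Z.abs n \/ Z.of_nat (3 * N) < Z.abs k)%Z ->
  kz_summand omega0 z S0 k l m n = 0.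
Proof.
  intros hN D. unfold kz_summand, in_nr.
  destruct (Z.eqb_spec (l + m) (n + k)) as [E |]; [| reflexivity].
  rewrite (T_supported S0 N l m n k hN E D), Rmult_0_r.
  destruct (_ && _)%bool; reflexivity.
Qed.

(* The terms excluded from nr_k (l = k, hence m = n, or m = k, hence l = n)
   cancel in the difference, so the constraint can be dropped. *)
Lemma kz_summand_split (omega0 z : R) (S0 : Z -> R) (k l m n : Z) :
  kz_summand omega0 z S0 k l m n =
  resonant_term omega0 z S0 k l m n - resonant_term omega0 z S0 m n k l.
Proof.
  unfold kz_summand, resonant_term, in_nr, T.
  rewrite (Cnorm2_H_swap omega0 z l m n k).
  destruct (Z.eqb_spec (l + m) (n + k)), (Z.eqb_spec (n + k) (l + m));
    try lia; simpl; [| ring].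
  destruct (Z.eqb_spec l k), (Z.eqb_spec m k); simpl;
    try (assert (m = n) by lia); try (assert (l = n) by lia); subst; ring.
Qed.

Lemma kz_summand_box_sum_eq0 (omega0 z : R) (S0 : Z -> R) (M : nat) :
  B (fun k => B (fun l => B (fun m => B (fun n =>
    kz_summand omega0 z S0 k l m n) M) M) M) M = 0.
Proof.
  set (X := resonant_term omega0 z S0).
  rewrite (box_sum_ext _ (fun k => B (fun l => B (fun m => B (fun n =>
    X k l m n) M) M) M - B (fun l => B (fun m => B (fun n => X m n k l) M) M) M)).
  - rewrite box_sum_minus, (box_sum_swap_pairs (fun k l m n => X m n k l)). ring.
  - intro k. rewrite <- box_sum_minus. apply box_sum_ext; intro l.
    rewrite <- box_sum_minus. apply box_sum_ext; intro m.
    rewrite <- box_sum_minus. apply box_sum_ext; intro n.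
    apply kz_summand_split.
Qed.

Theorem mainTheorem5 (omega0 z eps : R) (S0 : Z -> R)
  (homega0 : 0 < omega0) (hz : 0 <= z) (heps : 0 < eps)
  (hS0 : fin_supp S0) :
  Zsum (SKZ omega0 eps z S0) = Zsum S0.
Proof.
  destruct hS0 as [N hN].
  assert (hM : supported_in S0 (3 * N)) by (intros k Hk; apply hN; lia).
  assert (HSKZ : forall k, SKZ omega0 eps z S0 k = S0 k + 8 * eps ^ 2 *
    B (fun l => B (fun m => B (fun n =>
      kz_summand omega0 z S0 k l m n) (3 * N)) (3 * N)) (3 * N)).
  { intro k. unfold SKZ. rewrite (Zsum3_box _ (3 * N)); [reflexivity |].
    intros l m n D. apply (kz_summand_supported _ _ _ N); tauto. }
  rewrite (Zsum_box S0 _ hM), (Zsum_box _ (3 * N)).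
  - rewrite (box_sum_ext _ _ _ HSKZ), box_sum_plus, box_sum_scal,
      kz_summand_box_sum_eq0. ring.
  - intros k Hk. rewrite HSKZ, (hM k Hk).
    rewrite box_sum_eq0; [ring |]. intro l.
    apply box_sum_eq0; intro m; apply box_sum_eq0; intro n.
    apply (kz_summand_supported _ _ _ N); tauto.
Qed.
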